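(* For $k\ge 3$ let $N_k(t)=\mathbb{E}[Z_k(t)]$ be the expected number of vertices of degree $k$ in a Random Apollonian Network after $t$ steps. For every $k \geq 3$ the limit $\lim_{t \to +\infty} \frac{N_k(t)}{t}$ exists. Writing $b_k=\lim_{t \to +\infty} \frac{N_k(t)}{t}$, we have $b_3=\frac{2}{5}$, $b_4=\frac{1}{5}$, $b_5=\frac{4}{35}$, and $b_k = \frac{24}{k(k+1)(k+2)}$ for $k\geq 6$. Furthermore, for all $k \geq 3$ (and all $t\ge 1$), $$ |N_k(t) - b_k t| \leq K, \quad\text{where } K=3.6.$$
   Context: A Random Apollonian Network (RAN) is generated as follows: start (at time $t=0$) with a single triangular face. At each step $t=1,2,\dots$, pick one of the current (bounded) triangular faces uniformly at random, insert a new vertex inside it, and connect it to the three vertices on the boundary of that face, subdividing the face into three new triangular faces. After $t$ steps there are $2t+1$ triangular faces. $Z_k(t)$ denotes the number of vertices of degree exactly $k$ after $t$ steps. *)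

From Stdlib Require Import Reals Lra Lia List Arith.
Import ListNotations.
Open Scope R_scope.

(* A state of the Random Apollonian Network: number of vertices (labelled
   0 .. nv-1), the list of edges, and the list of bounded triangular faces. *)
Record ran_state := mkState {
  nv : nat;
  edges : list (nat * nat);
  faces : list (nat * nat * nat)
}.

Definition ran_init : ran_state :=
  mkState 3 [(0,1);(0,2);(1,2)]%nat [(0,1,2)]%nat.

Definition ran_step (s : ran_state) (i : nat) : ran_state :=
  let '(a, b, c) := nth i (faces s) (0,0,0)%nat in
  let n := nv s in
  mkState (S n)
    (edges s ++ [(a,n);(b,n);(c,n)])
    (firstn i (faces s) ++ [(a,b,n);(a,c,n);(b,c,n)] ++ skipn (S i) (faces s)).

Fixpoint ran_expect (t : nat) (f : ran_state -> R) (s : ran_state) : R :=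
  match t with
  | O => f s
  | S t' =>
      / INR (length (faces s)) *
      fold_right Rplus 0
        (map (fun i => ran_expect t' f (ran_step s i)) (seq 0 (length (faces s))))
  end.

Definition degree (s : ran_state) (v : nat) : nat :=
  length (filter (fun e => orb (Nat.eqb (fst e) v) (Nat.eqb (snd e) v)) (edges s)).

Definition Zk (k : nat) (s : ran_state) : nat :=
  length (filter (fun v => Nat.eqb (degree s v) k) (seq 0 (nv s))).

Definition Nk (k t : nat) : R := ran_expect t (fun s => INR (Zk k s)) ran_init.

Definition bk (k : nat) : R :=
  match k with
  | 3%nat => 2/5
  | 4%nat => 1/5
  | 5%nat => 4/35
  | _ => 24 / (INR k * INR (k+1) * INR (k+2))
  end.

From Stdlib Require Import Reals Lra Lia List Arith.
Import ListNotations.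
Open Scope R_scope.

(** A step that subdivides the face [abc] raises the degrees of [a], [b], [c] by one and
    creates a vertex of degree 3; since a vertex of degree [d] lies on [d] faces (or [d - 1]
    if it is outer) among the [2t+1] faces, averaging over the chosen face gives
      N_k(t+1) = N_k(t) + [k = 3] + ((k-1) N_(k-1)(t) - k N_k(t) + O(t)) / (2t+1),
    where the correction O coming from the three outer vertices lies in [-3, 3].  The
    constants satisfy b_k = (k-1) b_(k-1) / (k+2) (with b_3 = 2/5), so the error
    e_k(t) = N_k(t) - b_k t obeys
      e_k(t+1) = ((2t+1-k) e_k(t) + (k-1) e_(k-1)(t) + c) / (2t+1),   |c| <= 3.6,
    a convex combination whenever k <= 2t+1.  Induction on t then bounds |e_k(t)| by 3.6;
    the remaining cases are vertices of degree above t+2, which do not exist, and N_4(2). *)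

Definition lsum {A : Type} (l : list A) (f : A -> R) : R := fold_right Rplus 0 (map f l).

Lemma lsum_cons {A : Type} (x : A) l f : lsum (x :: l) f = f x + lsum l f.
Proof. reflexivity. Qed.

Lemma lsum_nil {A : Type} (f : A -> R) : lsum [] f = 0.
Proof. reflexivity. Qed.

Lemma lsum_app {A : Type} (l1 l2 : list A) f : lsum (l1 ++ l2) f = lsum l1 f + lsum l2 f.
Proof.
  induction l1 as [|x l1 IH]; [unfold lsum; cbn; ring|].
  rewrite <- app_comm_cons, !lsum_cons, IH; ring.
Qed.

Lemma lsum_ext_in {A : Type} (l : list A) f g :
  (forall x, In x l -> f x = g x) -> lsum l f = lsum l g.
Proof. intros H; unfold lsum; f_equal; apply map_ext_in, H. Qed.

Lemma lsum_le {A : Type} (l : list A) f g :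
  (forall x, In x l -> f x <= g x) -> lsum l f <= lsum l g.
Proof.
  induction l as [|x l IH]; intros H; [unfold lsum; cbn; lra|].
  rewrite !lsum_cons; apply Rplus_le_compat; [apply H; left; reflexivity|].
  apply IH; intros y Hy; apply H; right; exact Hy.
Qed.

Lemma lsum_plus {A : Type} (l : list A) f g :
  lsum l (fun x => f x + g x) = lsum l f + lsum l g.
Proof. induction l as [|x l IH]; [unfold lsum; cbn; ring|]. rewrite !lsum_cons, IH; ring. Qed.

Lemma lsum_scal {A : Type} (l : list A) c f : lsum l (fun x => c * f x) = c * lsum l f.
Proof. induction l as [|x l IH]; [unfold lsum; cbn; ring|]. rewrite !lsum_cons, IH; ring. Qed.

Lemma lsum_const {A : Type} (l : list A) c : lsum l (fun _ => c) = INR (length l) * c.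
Proof.
  induction l as [|x l IH]; [unfold lsum; cbn; ring|].
  rewrite lsum_cons, IH, length_cons, S_INR; ring.
Qed.

Lemma lsum_comm {A B : Type} (la : list A) (lb : list B) F :
  lsum la (fun i => lsum lb (F i)) = lsum lb (fun v => lsum la (fun i => F i v)).
Proof.
  induction la as [|x la IH].
  - rewrite (lsum_ext_in lb _ (fun _ => 0)) by reflexivity.
    rewrite lsum_const; unfold lsum; cbn; ring.
  - rewrite lsum_cons, IH, <- lsum_plus; reflexivity.
Qed.

Lemma lsum_nth {A : Type} (l : list A) d f :
  lsum (seq 0 (length l)) (fun i => f (nth i l d)) = lsum l f.
Proof.
  induction l as [|x l IH]; [reflexivity|].
  rewrite length_cons, <- cons_seq, <- seq_shift, !lsum_cons; f_equal.
  rewrite <- IH; unfold lsum; rewrite map_map; reflexivity.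
Qed.

Lemma lsum_filter {A : Type} (p : A -> bool) l :
  INR (length (filter p l)) = lsum l (fun x => if p x then 1 else 0).
Proof.
  induction l as [|x l IH]; [reflexivity|].
  rewrite lsum_cons; cbn [filter]; destruct (p x); rewrite <- IH; [|ring].
  rewrite length_cons, S_INR; ring.
Qed.

Lemma ran_expect_S t f s : ran_expect (S t) f s =
  / INR (length (faces s)) * lsum (seq 0 (length (faces s))) (fun i => ran_expect t f (ran_step s i)).
Proof. reflexivity. Qed.

Lemma ran_expect_S_r t : forall f s, ran_expect (S t) f s = ran_expect t (ran_expect 1 f) s.
Proof.
  induction t as [|t IH]; intros f s; [reflexivity|].
  rewrite ran_expect_S, (ran_expect_S t); f_equal.
  apply lsum_ext_in; intros i _; apply IH.
Qed.

Lemma ran_expect_plus t : forall f g s,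
  ran_expect t (fun x => f x + g x) s = ran_expect t f s + ran_expect t g s.
Proof.
  induction t as [|t IH]; intros f g s; [reflexivity|].
  rewrite !ran_expect_S, (lsum_ext_in _ _ _ (fun i _ => IH f g (ran_step s i))), lsum_plus; ring.
Qed.

Lemma ran_expect_scal t : forall c f s, ran_expect t (fun x => c * f x) s = c * ran_expect t f s.
Proof.
  induction t as [|t IH]; intros c f s; [reflexivity|].
  rewrite !ran_expect_S, (lsum_ext_in _ _ _ (fun i _ => IH c f (ran_step s i))), lsum_scal; ring.
Qed.

Definition face_mem (v : nat) (f : nat * nat * nat) : bool :=
  let '(a, b, c) := f in ((a =? v) || (b =? v) || (c =? v))%bool.

Definition face_count (s : ran_state) (v : nat) : nat := length (filter (face_mem v) (faces s)).

Lemma skipn_nth_cons {A : Type} (l : list A) i d :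
  (i < length l)%nat -> skipn i l = nth i l d :: skipn (S i) l.
Proof.
  revert i; induction l as [|x l IH]; intros [|i] Hi; cbn in *; try lia; [reflexivity|].
  apply IH; lia.
Qed.

Lemma filter_length_0 {A : Type} (p : A -> bool) l :
  (forall x, In x l -> p x = false) -> length (filter p l) = 0%nat.
Proof.
  induction l as [|x l IH]; intros H; [reflexivity|].
  cbn; rewrite (H x (or_introl eq_refl)); apply IH; intros y Hy; apply H; right; exact Hy.
Qed.

Lemma In_firstn {A : Type} (x : A) n l : In x (firstn n l) -> In x l.
Proof. intros H; rewrite <- (firstn_skipn n l); apply in_or_app; left; exact H. Qed.

Lemma In_skipn {A : Type} (x : A) n l : In x (skipn n l) -> In x l.
Proof. intros H; rewrite <- (firstn_skipn n l); apply in_or_app; right; exact H. Qed.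

Section RanStep.

Variables (s : ran_state) (i a b c : nat).
Hypothesis Hface : nth i (faces s) (0, 0, 0)%nat = (a, b, c).

Lemma ran_step_nv : nv (ran_step s i) = S (nv s).
Proof. unfold ran_step; rewrite Hface; reflexivity. Qed.

Lemma ran_step_edges : edges (ran_step s i) = edges s ++ [(a, nv s); (b, nv s); (c, nv s)].
Proof. unfold ran_step; rewrite Hface; reflexivity. Qed.

Lemma ran_step_faces : faces (ran_step s i) =
  firstn i (faces s) ++ [(a, b, nv s); (a, c, nv s); (b, c, nv s)] ++ skipn (S i) (faces s).
Proof. unfold ran_step; rewrite Hface; reflexivity. Qed.

Lemma degree_step_new :
  (forall e, In e (edges s) -> (fst e < nv s /\ snd e < nv s)%nat) ->
  degree (ran_step s i) (nv s) = 3%nat.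
Proof.
  intros Hedges; unfold degree; rewrite ran_step_edges, filter_app, length_app.
  rewrite filter_length_0; cbn; [rewrite Nat.eqb_refl, !Bool.orb_true_r; reflexivity|].
  intros e He; destruct (Hedges e He).
  apply Bool.orb_false_iff; split; apply Nat.eqb_neq; lia.
Qed.

Lemma face_count_step_new :
  (forall f, In f (faces s) -> face_mem (nv s) f = false) ->
  face_count (ran_step s i) (nv s) = 3%nat.
Proof.
  intros Hfaces; unfold face_count; rewrite ran_step_faces, !filter_app, !length_app.
  rewrite (filter_length_0 _ (firstn _ _)), (filter_length_0 _ (skipn _ _)).
  - cbn; rewrite Nat.eqb_refl, !Bool.orb_true_r; reflexivity.
  - intros f Hf; apply Hfaces, (In_skipn _ _ _ Hf).
  - intros f Hf; apply Hfaces, (In_firstn _ _ _ Hf).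
Qed.

Hypotheses (Hab : a <> b) (Hac : a <> c) (Hbc : b <> c).

Lemma degree_step_old v : v <> nv s ->
  degree (ran_step s i) v = (degree s v + Nat.b2n (face_mem v (a, b, c)))%nat.
Proof.
  intros Hv; unfold degree; rewrite ran_step_edges, filter_app, length_app; f_equal.
  cbn; rewrite (proj2 (Nat.eqb_neq (nv s) v)) by congruence.
  destruct (Nat.eqb_spec a v), (Nat.eqb_spec b v), (Nat.eqb_spec c v); cbn; lia.
Qed.

Lemma face_count_step_old v : (i < length (faces s))%nat -> v <> nv s ->
  face_count (ran_step s i) v = (face_count s v + Nat.b2n (face_mem v (a, b, c)))%nat.
Proof.
  intros Hi Hv; unfold face_count; rewrite ran_step_faces.
  rewrite <- (firstn_skipn i (faces s)) at 3.
  rewrite (skipn_nth_cons _ _ (0, 0, 0)%nat Hi), Hface, !filter_app, !length_app.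
  cbn [filter face_mem]; rewrite (proj2 (Nat.eqb_neq (nv s) v)) by congruence.
  destruct (Nat.eqb_spec a v), (Nat.eqb_spec b v), (Nat.eqb_spec c v); cbn; lia.
Qed.

End RanStep.

(* Each outer vertex 0, 1, 2 also lies on the unbounded face, hence the [v <? 3]. *)
Record ran_wf (m : nat) (s : ran_state) : Prop := {
  wf_nv : nv s = (m + 3)%nat;
  wf_nfaces : length (faces s) = (2 * m + 1)%nat;
  wf_edges : forall e, In e (edges s) -> (fst e < nv s /\ snd e < nv s)%nat;
  wf_faces : forall a b c, In (a, b, c) (faces s) ->
    (a < nv s /\ b < nv s /\ c < nv s /\ a <> b /\ a <> c /\ b <> c)%nat;
  wf_degree : forall v, (v < nv s)%nat -> degree s v = (face_count s v + Nat.b2n (v <? 3))%nat;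
  wf_degree_le : forall v, (v < nv s)%nat -> (degree s v <= m + 2)%nat;
  wf_init : m = 0%nat -> s = ran_init;
  wf_degree_ge : (1 <= m)%nat -> forall v, (v < nv s)%nat -> (3 <= degree s v)%nat
}.

Lemma ran_wf_init : ran_wf 0 ran_init.
Proof.
  constructor; auto; cbn [nv edges faces ran_init].
  - intros e He; repeat destruct He as [<-|He]; cbn in *; lia.
  - intros a b c [Hf|[]]; injection Hf as <- <- <-; lia.
  - intros v Hv; destruct v as [|[|[|]]]; [reflexivity..|lia].
  - intros v Hv; destruct v as [|[|[|]]]; cbn; lia.
  - lia.
Qed.

Section StepInvariant.

Variables (m i a b c : nat) (s : ran_state).
Hypotheses (Hwf : ran_wf m s) (Hi : (i < length (faces s))%nat)
  (Hface : nth i (faces s) (0, 0, 0)%nat = (a, b, c)).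

Lemma chosen_face_wf : (a < nv s /\ b < nv s /\ c < nv s /\ a <> b /\ a <> c /\ b <> c)%nat.
Proof. apply (wf_faces _ _ Hwf); rewrite <- Hface; apply nth_In, Hi. Qed.

Lemma new_vertex_not_in_faces f : In f (faces s) -> face_mem (nv s) f = false.
Proof.
  destruct f as [[x y] z]; intros Hf; destruct (wf_faces _ _ Hwf x y z Hf) as (? & ? & ? & _).
  cbn; repeat (apply Bool.orb_false_iff; split); apply Nat.eqb_neq; lia.
Qed.

Lemma wf_step_nfaces : length (faces (ran_step s i)) = (2 * S m + 1)%nat.
Proof.
  rewrite (ran_step_faces s i a b c Hface), !length_app, length_firstn, length_skipn.
  pose proof (wf_nfaces _ _ Hwf); cbn [length]; lia.
Qed.

Lemma wf_step_edges e : In e (edges (ran_step s i)) ->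
  (fst e < nv (ran_step s i) /\ snd e < nv (ran_step s i))%nat.
Proof.
  rewrite (ran_step_nv s i a b c Hface), (ran_step_edges s i a b c Hface).
  destruct chosen_face_wf as (? & ? & ? & _).
  intros He; apply in_app_or in He as [He|He].
  - destruct (wf_edges _ _ Hwf e He); lia.
  - repeat destruct He as [<-|He]; cbn in *; lia.
Qed.

Lemma wf_step_faces x y z : In (x, y, z) (faces (ran_step s i)) ->
  (x < nv (ran_step s i) /\ y < nv (ran_step s i) /\ z < nv (ran_step s i) /\
   x <> y /\ x <> z /\ y <> z)%nat.
Proof.
  rewrite (ran_step_nv s i a b c Hface), (ran_step_faces s i a b c Hface).
  destruct chosen_face_wf as (? & ? & ? & ? & ? & ?).
  intros Hf; apply in_app_or in Hf as [Hf|Hf]; [|apply in_app_or in Hf as [Hf|Hf]].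
  - destruct (wf_faces _ _ Hwf x y z (In_firstn _ _ _ Hf)); lia.
  - repeat destruct Hf as [Hf|Hf]; [injection Hf as <- <- <-; lia..|destruct Hf].
  - destruct (wf_faces _ _ Hwf x y z (In_skipn _ _ _ Hf)); lia.
Qed.

Lemma wf_step_degree v : (v < nv (ran_step s i))%nat ->
  degree (ran_step s i) v = (face_count (ran_step s i) v + Nat.b2n (v <? 3))%nat.
Proof.
  rewrite (ran_step_nv s i a b c Hface); intros Hv.
  destruct chosen_face_wf as (_ & _ & _ & Hab & Hac & Hbc).
  pose proof (wf_nv _ _ Hwf) as Hnv.
  destruct (Nat.eq_dec v (nv s)) as [->|Hne].
  - rewrite (degree_step_new s i a b c Hface (wf_edges _ _ Hwf)).
    rewrite (face_count_step_new s i a b c Hface new_vertex_not_in_faces).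
    rewrite (proj2 (Nat.ltb_ge (nv s) 3)) by lia; reflexivity.
  - rewrite (degree_step_old s i a b c Hface Hab Hac Hbc v Hne).
    rewrite (face_count_step_old s i a b c Hface Hab Hac Hbc v Hi Hne).
    rewrite (wf_degree _ _ Hwf v) by lia; lia.
Qed.

Lemma wf_step_degree_le v : (v < nv (ran_step s i))%nat -> (degree (ran_step s i) v <= S m + 2)%nat.
Proof.
  rewrite (ran_step_nv s i a b c Hface); intros Hv.
  destruct chosen_face_wf as (_ & _ & _ & Hab & Hac & Hbc).
  destruct (Nat.eq_dec v (nv s)) as [->|Hne].
  - rewrite (degree_step_new s i a b c Hface (wf_edges _ _ Hwf)); lia.
  - rewrite (degree_step_old s i a b c Hface Hab Hac Hbc v Hne).
    pose proof (wf_degree_le _ _ Hwf v ltac:(lia)); destruct (face_mem v _); cbn; lia.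
Qed.

(* After the first step every outer vertex has gained an edge; later steps never lower degrees. *)
Lemma wf_step_degree_ge v : (v < nv (ran_step s i))%nat -> (3 <= degree (ran_step s i) v)%nat.
Proof.
  rewrite (ran_step_nv s i a b c Hface); intros Hv.
  destruct chosen_face_wf as (_ & _ & _ & Hab & Hac & Hbc).
  destruct (Nat.eq_dec v (nv s)) as [->|Hne].
  - rewrite (degree_step_new s i a b c Hface (wf_edges _ _ Hwf)); lia.
  - rewrite (degree_step_old s i a b c Hface Hab Hac Hbc v Hne).
    destruct m as [|m'].
    + pose proof (wf_init _ _ Hwf eq_refl) as Hs; rewrite Hs in Hface, Hi, Hne, Hv |- *.
      cbn in Hi; assert (i = 0%nat) as -> by lia.
      injection Hface as <- <- <-; cbn in Hv, Hne.
      destruct v as [|[|[|]]]; [cbn; lia..|lia].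
    + pose proof (wf_degree_ge _ _ Hwf ltac:(lia) v ltac:(lia)); lia.
Qed.

End StepInvariant.

Lemma ran_wf_step m s i : ran_wf m s -> (i < length (faces s))%nat -> ran_wf (S m) (ran_step s i).
Proof.
  intros Hwf Hi; destruct (nth i (faces s) (0, 0, 0)%nat) as [[a b] c] eqn:Hface.
  constructor.
  - rewrite (ran_step_nv s i a b c Hface), (wf_nv _ _ Hwf); lia.
  - eapply wf_step_nfaces; eassumption.
  - eapply wf_step_edges; eassumption.
  - eapply wf_step_faces; eassumption.
  - eapply wf_step_degree; eassumption.
  - eapply wf_step_degree_le; eassumption.
  - discriminate.
  - intros _; eapply wf_step_degree_ge; eassumption.
Qed.

Lemma ran_expect_le_wf t : forall m f g s, ran_wf m s ->
  (forall s', ran_wf (t + m) s' -> f s' <= g s') -> ran_expect t f s <= ran_expect t g s.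
Proof.
  induction t as [|t IH]; intros m f g s Hwf Hfg; [exact (Hfg s Hwf)|].
  rewrite !ran_expect_S; apply Rmult_le_compat_l.
  - apply Rlt_le, Rinv_0_lt_compat, lt_0_INR; rewrite (wf_nfaces _ _ Hwf); lia.
  - apply lsum_le; intros i Hi; apply in_seq in Hi.
    apply (IH (S m)); [apply ran_wf_step; [exact Hwf|lia]|].
    intros s' Hs'; rewrite Nat.add_succ_r in Hs'; exact (Hfg s' Hs').
Qed.

Lemma ran_expect_ext_wf t m f g s : ran_wf m s ->
  (forall s', ran_wf (t + m) s' -> f s' = g s') -> ran_expect t f s = ran_expect t g s.
Proof.
  intros Hwf Hfg; apply Rle_antisym; apply (ran_expect_le_wf t m); auto;
    intros s' Hs'; rewrite (Hfg s' Hs'); apply Rle_refl.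
Qed.

Lemma ran_expect_const t : forall m c s, ran_wf m s -> ran_expect t (fun _ => c) s = c.
Proof.
  induction t as [|t IH]; intros m c s Hwf; [reflexivity|].
  rewrite ran_expect_S, (lsum_ext_in _ _ (fun _ => c)).
  - rewrite lsum_const, length_seq, (wf_nfaces _ _ Hwf); field; apply not_0_INR; lia.
  - intros i Hi; apply in_seq in Hi; apply (IH (S m)), ran_wf_step; [exact Hwf|lia].
Qed.

Definition iverson (b : bool) : R := if b then 1 else 0.

Definition outer_count (k : nat) (s : ran_state) : R :=
  lsum (seq 0 3) (fun v => iverson (degree s v =? k)).

Lemma Zk_lsum k s : INR (Zk k s) = lsum (seq 0 (nv s)) (fun v => iverson (degree s v =? k)).
Proof. apply lsum_filter. Qed.

Lemma face_count_lsum s v : INR (face_count s v) =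
  lsum (seq 0 (length (faces s))) (fun i => iverson (face_mem v (nth i (faces s) (0, 0, 0)%nat))).
Proof. unfold face_count; rewrite lsum_filter, <- (lsum_nth (faces s) (0, 0, 0)%nat); reflexivity. Qed.

Lemma Zk_step m s i k : ran_wf m s -> (i < length (faces s))%nat -> (1 <= k)%nat ->
  INR (Zk k (ran_step s i)) = INR (Zk k s) + iverson (k =? 3) +
    lsum (seq 0 (nv s)) (fun v => iverson (face_mem v (nth i (faces s) (0, 0, 0)%nat)) *
      (iverson (degree s v =? k - 1) - iverson (degree s v =? k))).
Proof.
  intros Hwf Hi Hk; destruct (nth i (faces s) (0, 0, 0)%nat) as [[a b] c] eqn:Hface.
  destruct (chosen_face_wf m i a b c s Hwf Hi Hface) as (_ & _ & _ & Hab & Hac & Hbc).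
  rewrite !Zk_lsum, (ran_step_nv s i a b c Hface), seq_S, lsum_app, lsum_cons, lsum_nil, Nat.add_0_l.
  rewrite (degree_step_new s i a b c Hface (wf_edges _ _ Hwf)), Nat.eqb_sym.
  rewrite (lsum_ext_in _ _ (fun v => iverson (degree s v =? k) + iverson (face_mem v (a, b, c)) *
    (iverson (degree s v =? k - 1) - iverson (degree s v =? k)))), lsum_plus; [ring|].
  intros v Hv; apply in_seq in Hv.
  rewrite (degree_step_old s i a b c Hface Hab Hac Hbc v) by lia.
  unfold iverson; destruct (face_mem v (a, b, c)); cbn [Nat.b2n].
  - destruct (Nat.eqb_spec (degree s v + 1) k), (Nat.eqb_spec (degree s v) (k - 1)),
      (Nat.eqb_spec (degree s v) k); lia || lra.
  - rewrite Nat.add_0_r; ring.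
Qed.

Lemma lsum_face_count_degree m s j : ran_wf m s ->
  lsum (seq 0 (nv s)) (fun v => INR (face_count s v) * iverson (degree s v =? j)) =
  INR j * INR (Zk j s) - outer_count j s.
Proof.
  intros Hwf.
  rewrite (lsum_ext_in _ _ (fun v => INR j * iverson (degree s v =? j) +
    (-1) * (iverson (v <? 3) * iverson (degree s v =? j)))).
  - rewrite lsum_plus, !lsum_scal, <- Zk_lsum, (wf_nv _ _ Hwf), Nat.add_comm, seq_app, lsum_app.
    rewrite (lsum_ext_in (seq (0 + 3) m) _ (fun _ => 0)), lsum_const.
    + unfold outer_count; rewrite (lsum_ext_in (seq 0 3) _ (fun v => iverson (degree s v =? j))); [ring|].
      intros v Hv; apply in_seq in Hv; rewrite (proj2 (Nat.ltb_lt v 3)) by lia; cbn; ring.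
    + intros v Hv; apply in_seq in Hv; rewrite (proj2 (Nat.ltb_ge v 3)) by lia; cbn; ring.
  - intros v Hv; apply in_seq in Hv.
    pose proof (wf_degree _ _ Hwf v ltac:(lia)) as Hdeg.
    unfold iverson; destruct (Nat.eqb_spec (degree s v) j) as [<-|]; [|ring].
    rewrite Hdeg, plus_INR; destruct (v <? 3); cbn; ring.
Qed.

Lemma ran_expect_one_Zk m s k : ran_wf m s -> (1 <= k)%nat ->
  ran_expect 1 (fun x => INR (Zk k x)) s = INR (Zk k s) + iverson (k =? 3) +
    ((INR (k - 1) * INR (Zk (k - 1) s) - outer_count (k - 1) s) -
     (INR k * INR (Zk k s) - outer_count k s)) / INR (2 * m + 1).
Proof.
  intros Hwf Hk; rewrite ran_expect_S.
  set (D := fun v => iverson (degree s v =? k - 1) - iverson (degree s v =? k)).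
  rewrite (lsum_ext_in _ _ (fun i => (INR (Zk k s) + iverson (k =? 3)) + lsum (seq 0 (nv s))
    (fun v => iverson (face_mem v (nth i (faces s) (0, 0, 0)%nat)) * D v))).
  2: { intros i Hi; apply in_seq in Hi; exact (Zk_step m s i k Hwf ltac:(lia) Hk). }
  rewrite lsum_plus, lsum_const, lsum_comm, length_seq.
  rewrite (lsum_ext_in (seq 0 (nv s)) _ (fun v => INR (face_count s v) * iverson (degree s v =? k - 1)
    + (-1) * (INR (face_count s v) * iverson (degree s v =? k)))).
  2: { intros v _.
       rewrite (lsum_ext_in _ _ (fun i => D v * iverson (face_mem v (nth i (faces s) (0, 0, 0)%nat))))
         by (intros; ring).
       rewrite lsum_scal, <- face_count_lsum; unfold D; ring. }
  rewrite lsum_plus, lsum_scal, !(lsum_face_count_degree m s) by exact Hwf.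
  rewrite (wf_nfaces _ _ Hwf); field; apply not_0_INR; lia.
Qed.

Definition outer_expect (k t : nat) : R := ran_expect t (outer_count k) ran_init.

Lemma Nk_succ t k : (1 <= k)%nat ->
  Nk k (S t) = Nk k t + iverson (k =? 3) +
    ((INR (k - 1) * Nk (k - 1) t - outer_expect (k - 1) t) -
     (INR k * Nk k t - outer_expect k t)) / INR (2 * t + 1).
Proof.
  intros Hk; unfold Nk at 1; rewrite ran_expect_S_r.
  set (c := / INR (2 * t + 1)).
  rewrite (ran_expect_ext_wf t 0 _ (fun x => INR (Zk k x) + (iverson (k =? 3) +
    (c * INR (k - 1) * INR (Zk (k - 1) x) + ((- c) * outer_count (k - 1) x +
    ((- c * INR k) * INR (Zk k x) + c * outer_count k x))))) ran_init ran_wf_init).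
  - rewrite !ran_expect_plus, !ran_expect_scal, (ran_expect_const t 0 _ _ ran_wf_init).
    unfold Nk, outer_expect, Rdiv; fold c; ring.
  - intros x Hx; rewrite Nat.add_0_r in Hx.
    rewrite (ran_expect_one_Zk t x k Hx Hk); unfold Rdiv; fold c; ring.
Qed.

Lemma outer_expect_bounds k t : 0 <= outer_expect k t <= 3.
Proof.
  assert (Hcount : forall s, 0 <= outer_count k s <= 3).
  { intros s; unfold outer_count, lsum, iverson; cbn.
    destruct (degree s 0 =? k), (degree s 1 =? k), (degree s 2 =? k); lra. }
  unfold outer_expect; split.
  - rewrite <- (ran_expect_const t 0 0 ran_init ran_wf_init).
    apply (ran_expect_le_wf t 0); [exact ran_wf_init|intros s _; apply Hcount].
  - rewrite <- (ran_expect_const t 0 3 ran_init ran_wf_init).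
    apply (ran_expect_le_wf t 0); [exact ran_wf_init|intros s _; apply Hcount].
Qed.

Lemma Nk_eq_0 k t : (forall s, ran_wf t s -> forall v, (v < nv s)%nat -> degree s v <> k) ->
  Nk k t = 0.
Proof.
  intros Hdeg; unfold Nk.
  rewrite (ran_expect_ext_wf t 0 _ (fun _ => 0) ran_init ran_wf_init).
  - exact (ran_expect_const t 0 0 _ ran_wf_init).
  - intros s Hs; rewrite Nat.add_0_r in Hs; unfold Zk; rewrite filter_length_0; [reflexivity|].
    intros v Hv; apply in_seq in Hv; apply Nat.eqb_neq, (Hdeg s Hs); lia.
Qed.

Lemma Nk_gt_max_degree k t : (t + 2 < k)%nat -> Nk k t = 0.
Proof.
  intros Hk; apply Nk_eq_0; intros s Hs v Hv.
  pose proof (wf_degree_le _ _ Hs v Hv); lia.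
Qed.

Lemma Nk_2 t : (1 <= t)%nat -> Nk 2 t = 0.
Proof.
  intros Ht; apply Nk_eq_0; intros s Hs v Hv.
  pose proof (wf_degree_ge _ _ Hs Ht v Hv); lia.
Qed.

Lemma Nk_3_1 : Nk 3 1 = 4.
Proof. unfold Nk; cbn; field. Qed.

Lemma Nk_4_2 : Nk 4 2 = 3.
Proof. unfold Nk; cbn; field. Qed.

(* Stands for b_(k-1) in the recursion for b_k; for k = 3 the corresponding term vanishes
   because N_2(t) = 0. *)
Definition bk_pred (k : nat) : R := if k =? 3 then 0 else bk (k - 1).

Lemma bk_ge6 k : (6 <= k)%nat -> bk k = 24 / (INR k * INR (k + 1) * INR (k + 2)).
Proof. intros Hk; do 6 (destruct k as [|k]; [lia|]); reflexivity. Qed.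

Lemma bk_recurrence k : (3 <= k)%nat ->
  bk k = (2 * iverson (k =? 3) + (INR k - 1) * bk_pred k) / (INR k + 2).
Proof.
  intros Hk; unfold bk_pred.
  destruct k as [|[|[|[|[|[|[|k]]]]]]]; try lia; try (cbn; field).
  set (K := S (S (S (S (S (S (S k))))))).
  assert (HK : INR K > 6) by (unfold K; rewrite !S_INR; pose proof (pos_INR k); lra).
  replace (K =? 3) with false by reflexivity; cbn [iverson].
  rewrite (bk_ge6 K), (bk_ge6 (K - 1)) by (unfold K; lia).
  replace (K - 1 + 1)%nat with K by (unfold K; lia).
  replace (K - 1 + 2)%nat with (K + 1)%nat by (unfold K; lia).
  rewrite minus_INR by (unfold K; lia); rewrite !plus_INR; cbn [INR].
  field; repeat split; lra.
Qed.

Lemma bk_mul_le k t : (4 <= k)%nat -> (t <= k)%nat -> 0 <= bk k * INR t <= 1.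
Proof.
  intros Hk Ht; apply le_INR in Ht; pose proof (pos_INR t).
  assert (Hb : 0 <= bk k /\ bk k * INR k <= 1).
  { destruct k as [|[|[|[|[|[|k]]]]]]; try lia; try (cbn; lra).
    rewrite bk_ge6 by lia; set (K := S (S (S (S (S (S k)))))).
    assert (HK : INR K >= 6) by (unfold K; rewrite !S_INR; pose proof (pos_INR k); lra).
    rewrite !plus_INR; cbn [INR].
    replace (24 / (INR K * (INR K + 1) * (INR K + (1 + 1))) * INR K)
      with (24 / ((INR K + 1) * (INR K + 2))) by (field; lra).
    split.
    - apply Rmult_le_pos; [lra|]; apply Rlt_le, Rinv_0_lt_compat.
      repeat apply Rmult_lt_0_compat; lra.
    - apply Rle_trans with (24 / 56); [|lra].
      apply Rmult_le_compat_l; [lra|]; apply Rinv_le_contravar; nra. }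
  split; [apply Rmult_le_pos; lra|].
  apply Rle_trans with (bk k * INR k); [apply Rmult_le_compat_l|]; lra.
Qed.

Lemma Rabs_convex_comb p q r x y z K : 0 <= p -> 0 <= q -> 0 < r ->
  Rabs x <= K -> Rabs y <= K -> Rabs z <= K ->
  Rabs ((p * x + q * y + r * z) / (p + q + r)) <= K.
Proof.
  intros Hp Hq Hr Hx Hy Hz.
  unfold Rdiv; rewrite Rabs_mult, Rabs_inv, (Rabs_pos_eq (p + q + r)) by lra.
  apply Rmult_le_reg_r with (p + q + r); [lra|].
  rewrite Rmult_assoc, Rinv_l, Rmult_1_r by lra.
  apply Rle_trans with (p * Rabs x + q * Rabs y + r * Rabs z).
  - eapply Rle_trans; [apply Rabs_triang|].
    eapply Rle_trans; [apply Rplus_le_compat_r, Rabs_triang|].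
    rewrite !Rabs_mult, (Rabs_pos_eq p), (Rabs_pos_eq q), (Rabs_pos_eq r) by lra; lra.
  - nra.
Qed.

Lemma Nk_error_succ t k : (3 <= k)%nat ->
  Nk k (S t) - bk k * INR (S t) =
  ((INR (2 * t + 1) - INR k) * (Nk k t - bk k * INR t) +
   (INR k - 1) * (Nk (k - 1) t - bk_pred k * INR t) +
   1 * (outer_expect k t - outer_expect (k - 1) t + iverson (k =? 3) - bk k)) /
  ((INR (2 * t + 1) - INR k) + (INR k - 1) + 1).
Proof.
  intros Hk; rewrite Nk_succ by lia; rewrite (bk_recurrence k Hk).
  rewrite S_INR, minus_INR, !plus_INR, mult_INR by lia; cbn [INR].
  pose proof (pos_INR t); pose proof (le_INR 3 k Hk); cbn [INR] in *.
  field; lra.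
Qed.

Lemma outer_drift_bound k t : (3 <= k)%nat ->
  Rabs (outer_expect k t - outer_expect (k - 1) t + iverson (k =? 3) - bk k) <= 36 / 10.
Proof.
  intros Hk; pose proof (outer_expect_bounds k t); pose proof (outer_expect_bounds (k - 1) t).
  apply Rabs_le; destruct (Nat.eq_dec k 3) as [->|Hk3]; [cbn in *; lra|].
  rewrite (proj2 (Nat.eqb_neq k 3) Hk3); cbn [iverson].
  pose proof (bk_mul_le k 4 ltac:(lia) ltac:(lia)); cbn [INR] in *; lra.
Qed.

Lemma Nk_error_bound t k : (1 <= t)%nat -> (3 <= k)%nat -> Rabs (Nk k t - bk k * INR t) <= 36 / 10.
Proof.
  intros Ht; revert k; induction t as [|t IH]; [lia|]; intros k Hk.
  assert (Hvanish : (4 <= k)%nat -> (S t + 2 < k)%nat -> Rabs (Nk k (S t) - bk k * INR (S t)) <= 36 / 10).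
  { intros Hk4 Hlt; rewrite Nk_gt_max_degree, Rminus_0_l, Rabs_Ropp by lia.
    pose proof (bk_mul_le k (S t) Hk4 ltac:(lia)); rewrite Rabs_pos_eq; lra. }
  destruct (Nat.eq_dec t 0) as [->|Ht0].
  { destruct (Nat.eq_dec k 3) as [->|Hk3]; [|apply Hvanish; lia].
    rewrite Nk_3_1; cbn; rewrite Rabs_pos_eq; lra. }
  destruct (le_lt_dec k (2 * t + 1)) as [HkF|HkF].
  - rewrite Nk_error_succ by exact Hk.
    apply Rabs_convex_comb; try lra.
    + pose proof (le_INR _ _ HkF); lra.
    + pose proof (le_INR 3 k Hk); cbn in *; lra.
    + apply IH; lia.
    + unfold bk_pred; destruct (Nat.eqb_spec k 3) as [->|Hk3].
      * rewrite Nk_2 by lia; rewrite Rmult_0_l, Rminus_0_r, Rabs_R0; lra.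
      * apply IH; lia.
    + apply outer_drift_bound, Hk.
  - destruct (Nat.eq_dec k 4) as [->|Hk4]; [|apply Hvanish; lia].
    assert (t = 1%nat) as -> by lia.
    rewrite Nk_4_2; cbn; rewrite Rabs_pos_eq; lra.
Qed.

Lemma Un_cv_div_of_bounded_error (u : nat -> R) b K :
  (forall t, (1 <= t)%nat -> Rabs (u t - b * INR t) <= K) -> Un_cv (fun t => u t / INR t) b.
Proof.
  intros Hu eps Heps; destruct (INR_archimed eps K Heps) as [N HN].
  exists (S N); intros n Hn; unfold R_dist.
  assert (HnN : INR (S N) <= INR n) by (apply le_INR; lia).
  rewrite S_INR in HnN; pose proof (pos_INR N).
  replace (u n / INR n - b) with ((u n - b * INR n) / INR n) by (field; lra).
  unfold Rdiv; rewrite Rabs_mult, Rabs_inv, (Rabs_pos_eq (INR n)) by lra.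
  apply Rmult_lt_reg_r with (INR n); [lra|].
  rewrite Rmult_assoc, Rinv_l, Rmult_1_r by lra.
  pose proof (Hu n ltac:(lia)); nra.
Qed.

Theorem mainTheorem3 : forall k : nat, (3 <= k)%nat ->
  Un_cv (fun t => Nk k t / INR t) (bk k) /\
  (forall t : nat, (1 <= t)%nat -> Rabs (Nk k t - bk k * INR t) <= 36/10).
Proof.
  intros k Hk; split.
  - apply (Un_cv_div_of_bounded_error _ _ (36 / 10)); intros t Ht; exact (Nk_error_bound t k Ht Hk).
  - intros t Ht; exact (Nk_error_bound t k Ht Hk).
Qed.
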